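(* Let $n\ge 4$ and let $G$ be a graph on $n$ vertices with non-negative integer weights on its edges. If the total weight of the subgraph of $G$ spanned by any four vertices is at least $3$, then the total weight of $G$ is at least $\left\lceil\tfrac{1}{3}n(n-2)\right\rceil$.
   Context: The total weight of a (sub)graph is the sum of the weights of its edges; the subgraph spanned by a set of vertices consists of those vertices and all edges of $G$ between them. *)

From mathcomp Require Import all_boot.
Set Implicit Arguments. Unset Strict Implicit. Unset Printing Implicit Defensive.

(* A (simple) graph on the vertex type T is given by its edge set E, a set of
   2-element subsets of T.  Edge weights are a function w : {set T} -> nat
   (only its values on edges of E matter). *)
Definition is_graph (T : finType) (E : {set {set T}}) : Prop :=
  forall e, e \in E -> #|e| = 2.

Definition total_weight (T : finType) (E : {set {set T}}) (w : {set T} -> nat) : nat :=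
  \sum_(e in E) w e.

Definition span_weight (T : finType) (E : {set {set T}}) (w : {set T} -> nat)
    (S : {set T}) : nat :=
  \sum_(e in E | e \subset S) w e.

Definition ceil_div (m d : nat) : nat := (m + d.-1) %/ d.

From mathcomp Require Import all_boot zify.

Set Implicit Arguments.
Unset Strict Implicit.
Unset Printing Implicit Defensive.

(* Removing one vertex v from an m-set S keeps each edge of S in exactly m - 2
   of the sets S :\ v, so these m subsets have total weight (m - 2) W(S).
   Starting from the four-vertex hypothesis (3 W >= 8 = 4 * 2), induction on m
   then gives 3 W(S) >= m (m - 2).  For an (m+1)-set, averaging the bounds of
   its m-subsets only yields 3 W >= m^2 - 2; the missing unit is recovered
   since m^2 - 2 is never a multiple of 3. *)

Lemma sqrn_mod3_neq2 (m : nat) : m ^ 2 %% 3 != 2.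
Proof. by rewrite -modnXm; case: (m %% 3) (ltn_pmod m (isT : 0 < 3)) => [|[|[|]]]. Qed.

Lemma mul3_average_bound (m W : nat) : 3 < m ->
  m.+1 * (m * (m - 2)) <= (m - 1) * (3 * W) -> m.+1 * (m - 1) <= 3 * W.
Proof.
move=> m_gt3 avg.
have : 3 * W != m ^ 2 - 2.
  apply: contraNneq (sqrn_mod3_neq2 m) => eqW.
  have -> : m ^ 2 = 3 * W + 2 by lia.
  by rewrite -modnDml modnMr.
nia.
Qed.

Section QuadrupleBound.
Variables (T : finType) (E : {set {set T}}) (w : {set T} -> nat).
Hypothesis graphE : is_graph E.
Hypothesis span_weight4 : forall S : {set T}, #|S| = 4 -> 3 <= span_weight E w S.

Lemma sum_span_weight_setD1 (S : {set T}) :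
  \sum_(v in S) span_weight E w (S :\ v) = (#|S| - 2) * span_weight E w S.
Proof.
rewrite /span_weight big_distrr /=.
under eq_bigr => v _ do under eq_bigl => e do rewrite subsetD1 andbA.
rewrite (exchange_big_dep (fun e => (e \in E) && (e \subset S))) /=; last by move=> v e _ /andP[].
apply: eq_bigr => e /andP[eE eS].
rewrite sum_nat_const.
have cardSDe : #|S :\: e| = #|S| - 2 by rewrite cardsD (setIidPr eS) (graphE eE).
rewrite -cardSDe; congr (_ * _); apply: eq_card => v.
by rewrite !inE eE eS andbC.
Qed.

Lemma span_weight_lower_bound (S : {set T}) :
  4 <= #|S| -> #|S| * (#|S| - 2) <= 3 * span_weight E w S.
Proof.
have [k] := ubnP #|S|; elim: k S => // k IH S ltSk.
rewrite leq_eqVlt => /predU1P[S4 | S_gt4].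
  by rewrite -S4; have := span_weight4 (esym S4); lia.
have [m cardS] : exists m, #|S| = m.+1 by exists #|S|.-1; lia.
rewrite cardS; apply: mul3_average_bound; first lia.
have -> : (m - 1) * (3 * span_weight E w S) =
    \sum_(v in S) 3 * span_weight E w (S :\ v).
  by rewrite -big_distrr /= sum_span_weight_setD1 cardS mulnCA.
rewrite -cardS -sum_nat_const; apply: leq_sum => v vS.
have cardSv : #|S :\ v| = m by apply: succn_inj; rewrite -cardS (cardsD1 v S) vS.
by have := IH (S :\ v); rewrite cardSv; apply; lia.
Qed.

End QuadrupleBound.

Theorem theorem1p10 (n : nat) (T : finType) (E : {set {set T}})
    (w : {set T} -> nat) :
  4 <= n -> #|T| = n -> is_graph E ->
  (forall S : {set T}, #|S| = 4 -> 3 <= span_weight E w S) ->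
  ceil_div (n * (n - 2)) 3 <= total_weight E w.
Proof.
move=> n_ge4 cardT graphE span_weight4.
have := span_weight_lower_bound graphE span_weight4 (S := [set: T]).
rewrite cardsT cardT => /(_ n_ge4).
have -> : span_weight E w setT = total_weight E w.
  by apply: eq_bigl => e; rewrite subsetT andbT.
rewrite /ceil_div; lia.
Qed.
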